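(* Every abelian Lawson paratopological group is Bohr separated.
   Context: All topological spaces are Hausdorff. A paratopological group is a group with a Hausdorff topology making multiplication continuous; a topological group additionally has continuous inversion. A paratopological group is Lawson if it has a neighborhood base at the unit consisting of subsemigroups. A topological group $K$ is totally bounded if for each neighborhood $U$ of the unit there is a finite $F$ with $FU=UF=K$. A paratopological group is Bohr separated if it admits a continuous bijective homomorphism onto a totally bounded topological group. *)

From HB Require Import structures.
From mathcomp Require Import all_boot all_algebra.
From mathcomp Require Import all_classical all_reals all_analysis.
Set Implicit Arguments. Unset Strict Implicit. Unset Printing Implicit Defensive.
Local Open Scope classical_set_scope.

Definition is_group (T : Type) (mul : T -> T -> T) (one : T) (inv : T -> T) : Prop :=
  [/\ forall x y z, mul x (mul y z) = mul (mul x y) z,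
      forall x, mul one x = x,
      forall x, mul x one = x,
      forall x, mul (inv x) x = one &
      forall x, mul x (inv x) = one].

Definition is_abelian (T : Type) (mul : T -> T -> T) : Prop :=
  forall x y, mul x y = mul y x.

Definition paratopological_group (T : topologicalType)
  (mul : T -> T -> T) (one : T) (inv : T -> T) : Prop :=
  [/\ is_group mul one inv, hausdorff_space T &
      continuous (fun p : T * T => mul p.1 p.2)].

Definition topological_group (T : topologicalType)
  (mul : T -> T -> T) (one : T) (inv : T -> T) : Prop :=
  paratopological_group mul one inv /\ continuous inv.

Definition lawson (T : topologicalType) (mul : T -> T -> T) (one : T) : Prop :=
  forall U : set T, nbhs one U ->
    exists V : set T, [/\ nbhs one V, V `<=` U &
      forall x y, V x -> V y -> V (mul x y)].

Definition totally_bounded_group (T : topologicalType) (mul : T -> T -> T) (one : T) : Prop :=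
  forall U : set T, nbhs one U ->
    exists F : seq T,
      (forall x, exists f u, [/\ f \in F, U u & x = mul f u]) /\
      (forall x, exists f u, [/\ f \in F, U u & x = mul u f]).

Definition bohr_separated (G : topologicalType) (mul : G -> G -> G) : Prop :=
  exists (K : topologicalType) (mulK : K -> K -> K) (oneK : K) (invK : K -> K)
         (h : G -> K),
    [/\ topological_group mulK oneK invK,
        totally_bounded_group mulK oneK,
        continuous h,
        bijective h &
        forall x y, h (mul x y) = mulK (h x) (h y)].

(* Let x <> 1. By Hausdorffness, continuity of multiplication and the Lawson property
   there is a neighborhood V of 1 which is a subsemigroup with x V disjoint from V; as G
   is abelian, N = V V^-1 is a subgroup not containing x. Since Q/Z is divisible, Zorn's
   lemma extends the character of N + <x> that is trivial on N and non-integral at x to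
   a character chi : G -> Q/Z; chi vanishes on V, so chi(x) <> 0 for a character whose
   kernel is a neighborhood of 1. These characters thus separate the points of G, and the
   topology they induce is a Hausdorff group topology coarser than that of G. It is
   totally bounded: finitely many characters take values in finitely many small cells of
   Q/Z. The identity of G is then the required continuous bijective homomorphism. *)

From HB Require Import structures.
From mathcomp Require Import all_boot all_order all_algebra.
From mathcomp Require Import all_classical all_reals all_analysis.
From mathcomp Require Import ring lra zify.
Import GRing.Theory Num.Theory Order.TTheory.
Set Implicit Arguments. Unset Strict Implicit. Unset Printing Implicit Defensive.
Local Open Scope classical_set_scope.
Local Open Scope ring_scope.

Definition is_subgroup (A : zmodType) (H : set A) :=
  H 0 /\ forall a b, H a -> H b -> H (a - b).

Section Subgroups.
Variable A : zmodType.
Variable H : set A.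
Hypothesis sH : is_subgroup H.

Lemma subgroupN a : H a -> H (- a).
Proof. by case: sH => H0 HB Ha; rewrite -sub0r; apply: HB. Qed.

Lemma subgroupD a b : H a -> H b -> H (a + b).
Proof. by move=> Ha Hb; rewrite -[b]opprK; apply: sH.2 => //; apply: subgroupN. Qed.

Lemma subgroupMz a k : H a -> H (a *~ k).
Proof.
move=> Ha; have Hn n : H (a *+ n).
  by elim: n => [|n IH]; [rewrite mulr0n; case: sH | rewrite mulrS; apply: subgroupD].
by case: k => n; rewrite ?NegzE ?mulrNz; [|apply: subgroupN]; apply: Hn.
Qed.

Lemma subgroup_mulz_preimage y : is_subgroup [set k : int | H (y *~ k)].
Proof.
split=> [|a b Ha Hb] /=; first by rewrite mulr0z; case: sH.
by rewrite mulrzBr; apply: sH.2.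
Qed.

End Subgroups.

Lemma int_subgroup_cyclic (P : set int) : is_subgroup P -> (exists2 k, k != 0 & P k) ->
  exists m : nat, [/\ (0 < m)%N, P m & forall k, P k -> (m %| k)%Z].
Proof.
move=> sP [k k0 Pk].
have [n n_gt0 Pn] : exists2 n : nat, (0 < n)%N & P n.
  exists `|k|%N; first by rewrite absz_gt0.
  by case: (ger0P k) => hk; [rewrite gez0_abs | rewrite ltz0_abs //; apply: (subgroupN sP)].
have ex : exists n : nat, (0 < n)%N && `[< P n >] by exists n; rewrite n_gt0 asboolT.
case: (ex_minnP ex) => m /andP[m_gt0 /asboolP Pm] m_min.
exists m; split=> // j Pj; apply/dvdz_mod0P.
have m_neq0 : m%:Z != 0 by rewrite eqz_nat -lt0n.
have Pr : P (j %% m)%Z.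
  by rewrite /modz; apply: sP.2 => //; rewrite mulrC -mulrzz; apply: subgroupMz.
move: (modz_ge0 j m_neq0) (ltz_pmod j (m_gt0 : 0 < m%:Z)) Pr.
case: (j %% m)%Z => // -[|r] _ // r_lt Pr.
have := m_min r.+1; rewrite asboolT // andbT => /(_ isT).
by move: r_lt; rewrite ltz_nat; lia.
Qed.

Lemma pairMz (A B : zmodType) (a : A) (b : B) k : (a, b) *~ k = (a *~ k, b *~ k).
Proof.
have Mn n : (a, b) *+ n = (a *+ n, b *+ n) by elim: n => // n IH; rewrite !mulrS IH.
by case: k => n; rewrite ?NegzE ?mulrNz -!pmulrn Mn.
Qed.

(* A subgroup of [A * rat] meeting [0 * rat] exactly in [0 * int] is the graph of a
   homomorphism from its domain to Q/Z. *)
Definition char_graph (A : zmodType) (P : set (A * rat)) :=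
  is_subgroup P /\ forall r, P (0, r) <-> r \is a Num.int.

Section CharGraph.
Variable A : zmodType.
Implicit Types (P : set (A * rat)) (y : A) (c : rat).

Definition domain P : set A := [set a | exists r, P (a, r)].

Lemma subgroup_domain P : is_subgroup P -> is_subgroup (domain P).
Proof.
move=> sP; split; first by exists 0; case: sP.
by move=> a b [r Pr] [s Ps]; exists (r - s); apply: sP.2 Pr Ps.
Qed.

Definition consistent P y c := forall k, domain P (y *~ k) -> P ((y, c) *~ k).

Definition adjoin P y c : set (A * rat) := [set p | exists k, P (p - (y, c) *~ k)].

Lemma adjoin_sub P y c : is_subgroup P -> P `<=` adjoin P y c.
Proof. by move=> sP p Pp; exists 0; rewrite mulr0z subr0. Qed.

Lemma adjoin_mem P y c : is_subgroup P -> adjoin P y c (y, c).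
Proof. by case=> P0 _; exists 1; rewrite mulr1z subrr. Qed.

Lemma char_graph_adjoin P y c :
  char_graph P -> consistent P y c -> char_graph (adjoin P y c).
Proof.
move=> [sP P0Z] cons; split.
  split=> [|p q [k Pk] [l Pl]]; first exact/adjoin_sub/sP.1.
  exists (k - l); suff -> : p - q - (y, c) *~ (k - l) =
    (p - (y, c) *~ k) - (q - (y, c) *~ l) by apply: sP.2.
  by rewrite mulrzBr !opprB addrACA [RHS]addrACA (addrC (- q)).
move=> r; split=> [[k Pk]|/P0Z]; last exact: adjoin_sub.
have Py : P ((y, c) *~ k).
  apply: cons; exists (c *~ k - r); rewrite -[(_, _)]opprK; apply: (subgroupN sP).
  suff -> : - (y *~ k, c *~ k - r) = (0, r) - (y, c) *~ k by [].
  by rewrite pairMz; congr (_, _); rewrite /= ?sub0r ?opprB.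
by apply/P0Z; rewrite -[(0, r)](subrK ((y, c) *~ k)); apply: subgroupD.
Qed.

Lemma consistent_exists P y : char_graph P -> exists c, consistent P y c.
Proof.
move=> [sP P0Z]; have sK := subgroup_mulz_preimage (subgroup_domain sP) y.
have [[k k0 Kk]|K0] := pselect (exists2 k, k != 0 & domain P (y *~ k)); last first.
  exists 0 => k Kk; have -> : k = 0 by apply: contrapT => /eqP k0; apply: K0; exists k.
  by rewrite mulr0z; case: sP.
have [m [m_gt0 [s Ps] mdvd]] := int_subgroup_cyclic sK (ex_intro2 _ _ k k0 Kk).
(* [m y] generates the multiples of [y] in the domain; take [c] with [m c = s]. *)
exists (s / m%:R) => j /mdvd /divzK <-; set q := (j %/ m)%Z.
have -> : (y, s / m%:R) *~ (q * m) = (y *~ m, s) *~ q.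
  rewrite (mulrC q) !pairMz !mulrzA; congr (_, _ *~ _).
  by rewrite -pmulrn -[LHS]mulr_natr divfK // pnatr_eq0 -lt0n.
exact: subgroupMz.
Qed.

Lemma char_graph_chain P0 (F : set (set (A * rat))) :
  char_graph P0 -> (forall X, F X -> char_graph (P0 `|` X)) -> total_on F subset ->
  char_graph (P0 `|` \bigcup_(X in F) X).
Proof.
move=> cP0 cF Ftot; set U := _ `|` _.
have common p q : U p -> U q -> exists2 Z, char_graph Z & [/\ Z p, Z q & Z `<=` U].
  have sub X : F X -> P0 `|` X `<=` U by move=> FX z [P0z|Xz]; [left | right; exists X].
  move=> [P0p|[X FX Xp]] [P0q|[Y FY Yq]].
  - by exists P0 => //; split=> // z; left.
  - by exists (P0 `|` Y); [exact: cF | split; [left|right|exact: sub]].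
  - by exists (P0 `|` X); [exact: cF | split; [right|left|exact: sub]].
  have [XY|YX] := Ftot _ _ FX FY.
  - by exists (P0 `|` Y); [exact: cF | split; [right; exact: XY|right|exact: sub]].
  - by exists (P0 `|` X); [exact: cF | split; [right|right; exact: YX|exact: sub]].
split; first split.
- by left; case: cP0 => -[].
- by move=> p q Up Uq; have [Z [[_ ZB] _] [Zp Zq /(_ _ (ZB _ _ Zp Zq))]] := common p q Up Uq.
move=> r; split=> [U0r|/(proj2 cP0 r).2]; last by left.
by have [Z [_ Z0] [Z0r _ _]] := common _ _ U0r U0r; apply/Z0.
Qed.

Lemma char_graph_maximal P0 : char_graph P0 ->
  exists2 M, char_graph M /\ P0 `<=` M & forall a, domain M a.
Proof.
move=> cP0; have [X [cX Xmax]] : exists X, char_graph (P0 `|` X) /\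
    forall Y, X `<` Y -> ~ char_graph (P0 `|` Y).
  by apply: Zorn_bigcup => F cF; apply: char_graph_chain => // X /cF.
exists (P0 `|` X) => [|y]; first by split=> // p; left.
apply: contrapT => ndom; have [c cons] := consistent_exists y cX.
pose Y := adjoin (P0 `|` X) y c; have cY := char_graph_adjoin cX cons.
have XY : X `<=` Y by move=> p Xp; apply: adjoin_sub cX.1 _ _; right.
apply: (Xmax Y); last first.
  by rewrite (_ : P0 `|` Y = Y) // setUidr // => p P0p; apply: adjoin_sub cX.1 _ _; left.
split=> // /(_ _ (adjoin_mem _ _ cX.1)) Xy.
by apply: ndom; exists c; right.
Qed.

End CharGraph.

Lemma char_graph_diff (A : zmodType) (P : set (A * rat)) a r s :
  char_graph P -> P (a, r) -> P (a, s) -> (r - s) \is a Num.int.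
Proof. by move=> [sP P0Z] Par Pas; apply/P0Z; rewrite -(subrr a); exact: sP.2 _ _ Par Pas. Qed.

Definition zero_graph (A : zmodType) (N : set A) : set (A * rat) :=
  [set p | N p.1 /\ p.2 \is a Num.int].

Lemma char_graph_zero (A : zmodType) (N : set A) : is_subgroup N -> char_graph (zero_graph N).
Proof.
move=> [N0 NB]; split; last by move=> r; split=> [[]|].
by split=> [|p q [Np Zp] [Nq Zq]]; split=> //=; [exact: NB | exact: rpredB].
Qed.

Lemma between01_notint (c : rat) : 0 < c -> c < 1 -> c \isn't a Num.int.
Proof. by move=> c0 c1; apply/negP => /intrP [z ez]; move: c0 c1; rewrite ez ltr0z ltrz1; lia. Qed.

Lemma consistent_zero_notint (A : zmodType) (N : set A) x : is_subgroup N -> ~ N x ->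
  exists2 c, consistent (zero_graph N) x c & c \isn't a Num.int.
Proof.
move=> sN Nx; have sK := subgroup_mulz_preimage sN x.
have [[k k0 Kk]|K0] := pselect (exists2 k, k != 0 & N (x *~ k)); last first.
  exists (1 / 2); last exact: between01_notint.
  move=> k [r [Nk _]]; have -> : k = 0 by apply: contrapT => /eqP k0; apply: K0; exists k.
  by rewrite mulr0z; apply: (char_graph_zero sN).1.1.
have [m [m_gt0 Nm mdvd]] := int_subgroup_cyclic sK (ex_intro2 _ _ k k0 Kk).
have m_gt1 : (1 < m)%N by case: m m_gt0 Nm {mdvd} => [|[|m]] //; rewrite mulr1z.
exists (1 / m%:R); last first.
  apply: between01_notint; first by rewrite divr_gt0 ?ltr0n.
  by rewrite ltr_pdivrMr ?ltr0n 1?ltnW // mul1r ltr1n.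
move=> j [r [Nj _]]; rewrite pairMz; split=> //=.
rewrite -(divzK (mdvd _ Nj)) (mulrC (j %/ m)%Z) mulrzA div1r -pmulrn -(mulr_natr (m%:R^-1)).
by rewrite mulVf ?pnatr_eq0 -?lt0n // -[1 *~ _]intz rpred_int.
Qed.

Definition eqmodZ (a b : rat) := (a - b) \is a Num.int.

Lemma eqmodZ_refl a : eqmodZ a a. Proof. by rewrite /eqmodZ subrr rpred0. Qed.

Lemma eqmodZ_sym a b : eqmodZ a b -> eqmodZ b a.
Proof. by rewrite /eqmodZ => h; rewrite -opprB rpredN. Qed.

Lemma eqmodZ_trans a b c : eqmodZ a b -> eqmodZ b c -> eqmodZ a c.
Proof. by rewrite /eqmodZ => h1 h2; rewrite -[a](subrK b) -addrA rpredD. Qed.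

Lemma eqmodZD a b c d : eqmodZ a b -> eqmodZ c d -> eqmodZ (a + c) (b + d).
Proof. by rewrite /eqmodZ opprD addrACA; apply: rpredD. Qed.

Lemma eqmodZN a b : eqmodZ a b -> eqmodZ (- a) (- b).
Proof. by rewrite /eqmodZ => h; rewrite -opprD rpredN. Qed.

Lemma eqmodZ_congr a b a' b' : a = a' -> b = b' -> eqmodZ a b -> eqmodZ a' b'.
Proof. by move=> -> ->. Qed.

Theorem separating_character (A : zmodType) (N : set A) x : is_subgroup N -> ~ N x ->
  exists chi : A -> rat, [/\ forall a b, eqmodZ (chi (a + b)) (chi a + chi b),
    forall n, N n -> eqmodZ (chi n) 0 & ~ eqmodZ (chi x) 0].
Proof.
move=> sN Nx; have [c cons c_notint] := consistent_zero_notint sN Nx.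
have cP1 := char_graph_adjoin (char_graph_zero sN) cons.
have [M [cM P1M] Mfull] := char_graph_maximal cP1.
pose chi a := projT1 (cid (Mfull a)); have Mchi a : M (a, chi a) := projT2 (cid (Mfull a)).
exists chi; split.
- move=> a b; apply: (char_graph_diff cM (Mchi _)).
  exact: (subgroupD cM.1 (Mchi a) (Mchi b)).
- move=> n Nn; apply: (char_graph_diff cM (Mchi _)).
  by apply/P1M/adjoin_sub; [exact: (char_graph_zero sN).1 | split].
- move=> chi_x; have := char_graph_diff cM (Mchi x) (P1M _ (adjoin_mem _ _ (char_graph_zero sN).1)).
  by move=> /(rpredB chi_x); rewrite subr0 opprB addrC subrK; apply/negP.
Qed.

Section AbelianZmod.
Variables (G : choiceType) (mul : G -> G -> G) (one : G) (inv : G -> G).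
Hypotheses (Hg : is_group mul one inv) (Hab : is_abelian mul).

Definition abelian_zmod (_ : is_group mul one inv) (_ : is_abelian mul) : Type := G.

Let mulA : associative mul. Proof. by case: Hg => h *; move=> x y z; rewrite h. Qed.
Let mul1 : left_id one mul. Proof. by case: Hg. Qed.
Let mulV : left_inverse one inv mul. Proof. by case: Hg. Qed.
Let mulC : commutative mul. Proof. exact: Hab. Qed.

HB.instance Definition _ := Choice.on (abelian_zmod Hg Hab).
HB.instance Definition _ :=
  @GRing.isZmodule.Build (abelian_zmod Hg Hab) one inv mul mulA mulC mul1 mulV.

End AbelianZmod.

Definition near_int (e r : rat) := exists z : int, `|r - z%:~R| < e.

Lemma near_int0 e : 0 < e -> near_int e 0.
Proof. by move=> e0; exists 0; rewrite subr0 normr0. Qed.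

Lemma near_intN e r : near_int e r -> near_int e (- r).
Proof. by move=> [z h]; exists (- z); rewrite intrN -opprD normrN. Qed.

Lemma near_int_le e d r : e <= d -> near_int e r -> near_int d r.
Proof. by move=> ed [z h]; exists z; exact: lt_le_trans h ed. Qed.

Lemma near_int_eqmodZ e r s : eqmodZ r s -> near_int e r -> near_int e s.
Proof.
move=> /intrP [w ew] [z h]; exists (z - w).
by have -> : s - (z - w)%:~R = r - z%:~R by rewrite intrB -ew; ring.
Qed.

Lemma near_int_half e r s : near_int (e / 2) r -> near_int (e / 2) s -> near_int e (r + s).
Proof.
move=> [z1 h1] [z2 h2]; exists (z1 + z2); rewrite [e]splitr.
have -> : r + s - (z1 + z2)%:~R = (r - z1%:~R) + (s - z2%:~R) by rewrite intrD; ring.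
by apply: le_lt_trans (ler_normD _ _) _; exact: ltrD.
Qed.

Lemma near_int_all r : (forall e, 0 < e -> near_int e r) -> r \is a Num.int.
Proof.
move=> near; apply: contrapT => r_notint.
have r_gt : (Num.floor r)%:~R < r.
  by rewrite lt_neqAle floor_le andbT; apply/eqP => e; apply: r_notint; rewrite -e intr_int.
have r_lt := floorD1_gt r; rewrite intrD in r_lt.
have [|z] := near (Num.min (r - (Num.floor r)%:~R) ((Num.floor r)%:~R + 1 - r)).
  by rewrite lt_min !subr_gt0 r_gt r_lt.
rewrite lt_min !ltr_norml => /andP[/andP[h1 h2] /andP[h3 h4]].
have [zr|rz] : (z <= Num.floor r) \/ (Num.floor r + 1 <= z) by lia.
- by move: zr; rewrite -(ler_int rat) => zr; lra.
- by move: rz; rewrite -(ler_int rat) intrD => rz; lra.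
Qed.

Definition frac (r : rat) := r - (Num.floor r)%:~R.

Lemma frac_ge0 r : 0 <= frac r. Proof. by rewrite /frac subr_ge0 floor_le. Qed.

Lemma frac_lt1 r : frac r < 1.
Proof. by have := floorD1_gt r; rewrite intrD /frac; lra. Qed.

Definition cell (m : nat) (r : rat) : nat := `|Num.floor (m%:R * frac r)|%N.

Lemma cell_lt m r : (0 < m)%N -> (cell m r < m)%N.
Proof.
move=> m_gt0; rewrite -ltz_nat /cell gez0_abs ?floor_ge0 ?mulr_ge0 ?ler0n ?frac_ge0 //.
rewrite floor_lt_int; change (m%:R * frac r < (m%:R : rat)).
have := frac_lt1 r; have := frac_ge0 r; have : (0 : rat) < m%:R by rewrite ltr0n.
set M := (m%:R : rat); set t := frac r; nra.
Qed.

Lemma cell_near (m : nat) e r s : 1 < m%:R * e -> cell m r = cell m s -> near_int e (r - s).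
Proof.
move=> me; rewrite /cell => /(congr1 Posz).
rewrite !gez0_abs ?floor_ge0 ?mulr_ge0 ?ler0n ?frac_ge0 // => same_cell.
exists (Num.floor r - Num.floor s).
have -> : r - s - (Num.floor r - Num.floor s)%:~R = frac r - frac s by rewrite /frac intrB; ring.
have a1 := floor_le (m%:R * frac r); have a2 := floorD1_gt (m%:R * frac r).
have b1 := floor_le (m%:R * frac s); have b2 := floorD1_gt (m%:R * frac s).
rewrite same_cell intrD in a1 a2; rewrite intrD in b2.
have m_ge0 : (0 : rat) <= m%:R by rewrite ler0n.
rewrite ltr_norml; move: a1 a2 b1 b2; set k := (Num.floor _)%:~R => a1 a2 b1 b2.
by apply/andP; split; nra.
Qed.

Lemma nat_mul_gt1 (e : rat) : 0 < e -> exists m : nat, 1 < m%:R * e.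
Proof.
move=> e0; exists (Num.Def.archi_bound e^-1).+1.
have /archi_boundP : 0 <= e^-1 by rewrite invr_ge0 ltW.
have := mulfV (lt0r_neq0 e0).
rewrite -addn1 natrD; set b := (_%:R); set v := e^-1; nra.
Qed.

Lemma finite_transversal (T : eqType) (I : finType) (f : T -> I) :
  exists s : seq T, forall x, exists2 y, y \in s & f y = f x.
Proof.
pose rep i := if pselect (exists x, f x = i) is left ex then Some (projT1 (cid ex)) else None.
exists (pmap rep (enum I)) => x.
have [y rep_fx] : exists y, rep (f x) = Some y.
  by rewrite /rep; case: pselect => [ex|[]]; [exists (projT1 (cid ex)) | exists x].
exists y; first by rewrite mem_pmap -rep_fx map_f ?mem_enum.
by move: rep_fx; rewrite /rep; case: pselect => // ex [<-]; exact: projT2 (cid ex).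
Qed.

Definition catf X n1 n2 (c1 : 'I_n1 -> X) (c2 : 'I_n2 -> X) : 'I_(n1 + n2) -> X :=
  fun i => match fintype.split i with inl j => c1 j | inr j => c2 j end.

Lemma catf_lshift X n1 n2 (c1 : 'I_n1 -> X) (c2 : 'I_n2 -> X) j :
  catf c1 c2 (lshift n2 j) = c1 j.
Proof. by rewrite /catf (unsplitK (inl _ j)). Qed.

Lemma catf_rshift X n1 n2 (c1 : 'I_n1 -> X) (c2 : 'I_n2 -> X) j :
  catf c1 c2 (rshift n1 j) = c2 j.
Proof. by rewrite /catf (unsplitK (inr _ j)). Qed.

Lemma catf_all X n1 n2 (c1 : 'I_n1 -> X) (c2 : 'I_n2 -> X) (P : X -> Prop) :
  (forall j, P (c1 j)) -> (forall j, P (c2 j)) -> forall i, P (catf c1 c2 i).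
Proof. by move=> h1 h2 i; rewrite /catf; case: fintype.split. Qed.

Section BohrTopology.
Variables (G : topologicalType) (mul : G -> G -> G) (one : G).

Definition character (chi : G -> rat) :=
  (forall a b, eqmodZ (chi (mul a b)) (chi a + chi b)) /\
  nbhs one [set g | eqmodZ (chi g) 0].

Definition bohr_ball n (cs : 'I_n -> G -> rat) e p : set G :=
  [set g | forall i, near_int e (cs i g - cs i p)].

Definition bohr_nbhs (p : G) : set_system G := fun U =>
  exists n (cs : 'I_n -> G -> rat) e,
    [/\ 0 < e, forall i, character (cs i) & bohr_ball cs e p `<=` U].

(* [G] with the coarsest topology making all characters continuous, Q/Z carrying the
   quotient metric of Q; the arguments only key the canonical instances. *)
Definition bohr (_ : G -> G -> G) (_ : G) : Type := G.

HB.instance Definition _ := Choice.on (bohr mul one).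
HB.instance Definition _ := hasNbhs.Build (bohr mul one) bohr_nbhs.

Lemma bohr_ball_center n (cs : 'I_n -> G -> rat) e p : 0 < e -> bohr_ball cs e p p.
Proof. by move=> e0 i; rewrite subrr; exact: near_int0. Qed.

Lemma bohr_nbhs_filter (p : bohr mul one) : ProperFilter (nbhs p).
Proof.
split; first by move=> [n [cs [e [e0 _ /(_ p (bohr_ball_center cs p e0))]]]].
split.
- by exists 0, (fun _ _ => 0), 1; split => //; case.
- move=> U V [n1 [c1 [e1 [e10 a1 h1]]]] [n2 [c2 [e2 [e20 a2 h2]]]].
  exists (n1 + n2), (catf c1 c2), (Num.min e1 e2); split.
  + by rewrite lt_min e10.
  + exact: catf_all.
  + move=> g hg; split.
      apply: h1 => j; have := hg (lshift n2 j); rewrite catf_lshift.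
      by apply: near_int_le; rewrite ge_min lexx.
    apply: h2 => j; have := hg (rshift n1 j); rewrite catf_rshift.
    by apply: near_int_le; rewrite ge_min lexx orbT.
- by move=> U V UV [n [cs [e [e0 a h]]]]; exists n, cs, e; split => // g /h /UV.
Qed.

Lemma bohr_nbhs_singleton (p : bohr mul one) U : nbhs p U -> U p.
Proof. by move=> [n [cs [e [e0 _]]]]; apply; exact: bohr_ball_center. Qed.

Lemma bohr_nbhs_nbhs (p : bohr mul one) (U : set (bohr mul one)) :
  nbhs p U -> nbhs p (nbhs^~ U).
Proof.
have e2_gt0 e : 0 < e -> 0 < e / 2 by move=> e0; rewrite divr_gt0.
move=> [n [cs [e [/e2_gt0 e0 a h]]]]; exists n, cs, (e / 2); split => // g hg.
exists n, cs, (e / 2); split => // g' hg'; apply: h => i.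
by apply: near_int_eqmodZ (near_int_half (hg' i) (hg i)); rewrite /eqmodZ subrKA subrr.
Qed.

HB.instance Definition _ := Nbhs_isNbhsTopological.Build (bohr mul one)
  bohr_nbhs_filter bohr_nbhs_singleton bohr_nbhs_nbhs.

End BohrTopology.

Section BohrGroup.
Variables (G : topologicalType) (mul : G -> G -> G) (one : G) (inv : G -> G).
Hypotheses (Hpg : paratopological_group mul one inv) (Hab : is_abelian mul).

Let Hg : is_group mul one inv. Proof. by case: Hpg. Qed.
Let mulA x y z : mul x (mul y z) = mul (mul x y) z. Proof. by case: Hg. Qed.
Let mul1 x : mul one x = x. Proof. by case: Hg. Qed.
Let mulr1 x : mul x one = x. Proof. by case: Hg. Qed.
Let mulV x : mul (inv x) x = one. Proof. by case: Hg. Qed.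
Let mulrV x : mul x (inv x) = one. Proof. by case: Hg. Qed.
Let mul_cont : continuous (fun p : G * G => mul p.1 p.2). Proof. by case: Hpg. Qed.

Local Notation character := (character mul one).
Local Notation B := (bohr mul one).

Lemma character_one chi : character chi -> eqmodZ (chi one) 0.
Proof.
move=> [chiM _]; have := chiM one one; rewrite mul1 => /eqmodZ_sym e.
by have := eqmodZD e (eqmodZ_refl (- chi one)); apply: eqmodZ_congr; ring.
Qed.

Lemma character_inv chi a : character chi -> eqmodZ (chi (inv a)) (- chi a).
Proof.
move=> chiC; have := chiC.1 (inv a) a; rewrite mulV => e.
have := eqmodZD (eqmodZ_trans (eqmodZ_sym e) (character_one chiC)) (eqmodZ_refl (- chi a)).
by apply: eqmodZ_congr; ring.
Qed.

Lemma character_divl chi a b : character chi ->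
  eqmodZ (chi (mul (inv a) b)) (chi b - chi a).
Proof.
move=> chiC; apply: eqmodZ_trans (chiC.1 _ _) _.
by have := eqmodZD (character_inv a chiC) (eqmodZ_refl (chi b)); apply: eqmodZ_congr; ring.
Qed.

Lemma character_mul2 chi a b p q : character chi ->
  eqmodZ (chi (mul a b) - chi (mul p q)) ((chi a - chi p) + (chi b - chi q)).
Proof.
move=> chiC; have := eqmodZD (chiC.1 a b) (eqmodZN (chiC.1 p q)).
by apply: eqmodZ_congr; ring.
Qed.

Lemma bohr_ball_nbhs n (cs : 'I_n -> G -> rat) e (p : B) :
  0 < e -> (forall i, character (cs i)) -> nbhs p (bohr_ball cs e p).
Proof. by move=> e0 chiC; exists n, cs, e; split. Qed.

Lemma bohr_mul_continuous : continuous (fun p : B * B => (mul p.1 p.2 : B)).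
Proof.
move=> [p q] U [n [cs [e [e0 chiC sub]]]].
have e2_gt0 : 0 < e / 2 by rewrite divr_gt0.
exists (bohr_ball cs (e / 2) p, bohr_ball cs (e / 2) q).
  by split; apply: bohr_ball_nbhs.
move=> [g g'] /= [hg hg']; apply: sub => i.
exact: near_int_eqmodZ (eqmodZ_sym (character_mul2 _ _ _ _ (chiC i))) (near_int_half _ _).
Qed.

Lemma bohr_inv_continuous : continuous (inv : B -> B).
Proof.
move=> p U [n [cs [e [e0 chiC sub]]]].
exists n, cs, e; split=> // g hg; apply: sub => i.
apply: near_int_eqmodZ (near_intN (hg i)).
have := eqmodZD (character_inv g (chiC i)) (eqmodZN (character_inv p (chiC i))).
by move/eqmodZ_sym; apply: eqmodZ_congr; ring.
Qed.

(* Characters vanish near [one], hence are locally constant on [G]. *)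
Lemma bohr_id_continuous : continuous (fun g : G => g : B).
Proof.
move=> p U [n [cs [e [e0 chiC sub]]]] /=.
have near_p i : nbhs p [set g | eqmodZ (cs i (mul (inv p) g)) 0].
  have : nbhs (mul (inv p, p).1 (inv p, p).2) [set g | eqmodZ (cs i g) 0].
    by rewrite /= mulV; case: (chiC i).
  move=> /mul_cont [[V W] /= [nV nW] VW]; apply: filterS nW => g Wg.
  by apply: (VW (inv p, g)); split=> //=; apply: nbhs_singleton nV.
have near_p_all := @filter_forall G 'I_n
  (fun i g => eqmodZ (cs i (mul (inv p) g)) 0) (nbhs p) (nbhs_filter p) near_p.
apply: (@filterS _ (nbhs p) _ _ _ _ near_p_all) => g hg; apply: sub => i.
apply: near_int_eqmodZ (near_int0 e0).
exact: eqmodZ_sym (eqmodZ_trans (eqmodZ_sym (character_divl p g (chiC i))) (hg i)).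
Qed.

Hypothesis Hlaw : lawson mul one.

(* [V V^-1], for a subsemigroup [V] with [x * V] disjoint from [V], is a subgroup of
   the abelian group [G] missing [x]; a character separating [x] from it vanishes on [V]. *)
Lemma character_separates x : x <> one -> exists2 chi, character chi & ~ eqmodZ (chi x) 0.
Proof.
move=> x_neq1; have hausG : hausdorff_space G by case: Hpg.
have [U [W [nU nW UW0]]] : exists U W, [/\ nbhs x U, nbhs one W & ~ (U `&` W !=set0)].
  apply: contrapT => ne; apply: x_neq1; apply: hausG => U W nU nW.
  by apply: contrapT => UW; apply: ne; exists U, W.
have nU' : nbhs (mul (x, one).1 (x, one).2) U by rewrite /= mulr1.
have [[U1 U2] /= [nU1 nU2] xU2U] := mul_cont nU'.
have [V [nV VU2W Vmul]] := Hlaw (filterI nU2 nW).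
pose N : set (abelian_zmod Hg Hab) := [set g | exists a b, [/\ V a, V b & mul g b = a]].
have V1 : V one := nbhs_singleton nV.
have sN : is_subgroup N.
  split=> [|g g' [a [b [Va Vb ea]]] [a' [b' [Va' Vb' ea']]]].
    by exists one, one; rewrite mulr1.
  exists (mul a b'), (mul a' b); split; try exact: Vmul.
  rewrite -ea -ea'; change ((g - g') + (g' + b' + b) = g + b + b' :> abelian_zmod Hg Hab).
  by rewrite !addrA subrK addrAC.
have Nx : ~ N x.
  move=> [a [b [Va Vb xba]]]; apply: UW0; exists a; split; last by case: (VU2W _ Va).
  rewrite -xba; apply: (xU2U (x, b)); split=> /=; first exact: nbhs_singleton.
  by case: (VU2W _ Vb).
have [chi [chiD chiN chix]] := separating_character sN Nx.
exists chi => //; split; first exact: chiD.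
by apply: filterS nV => g Vg; apply: chiN; exists g, one; rewrite mulr1.
Qed.

Lemma bohr_hausdorff : hausdorff_space B.
Proof.
move=> p q pq_cluster; apply: contrapT => pq.
have [chi chiC chi_pq] : exists2 chi, character chi & ~ eqmodZ (chi p - chi q) 0.
  have [|chi chiC chi_x] := character_separates (x := mul p (inv q)).
    by move=> e; apply: pq; rewrite -(mulr1 p) -(mulV q) mulA e mul1.
  exists chi => // e; apply: chi_x; apply: eqmodZ_trans e.
  by rewrite Hab; apply: (eqmodZ_trans (character_divl _ _ chiC)); apply: eqmodZ_refl.
have [e e0 far] : exists2 e, 0 < e & ~ near_int e (chi p - chi q).
  apply: contrapT => near; apply: chi_pq; rewrite /eqmodZ subr0; apply: near_int_all => e e0.
  by apply: contrapT => far; apply: near; exists e.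
have e2_gt0 : 0 < e / 2 by rewrite divr_gt0.
have chiC1 (i : 'I_1) : character ((fun=> chi) i) by [].
have [g [gp gq]] := pq_cluster _ _ (bohr_ball_nbhs p e2_gt0 chiC1) (bohr_ball_nbhs q e2_gt0 chiC1).
apply: far; have := near_int_half (gq ord0) (near_intN (gp ord0)).
by rewrite (_ : _ + _ = chi p - chi q) //; ring.
Qed.

(* Points at which each character falls in the same cell of length [1/m < e] differ by
   an element of [U], and there are finitely many combinations of cells. *)
Lemma bohr_totally_bounded : totally_bounded_group (mul : B -> B -> B) one.
Proof.
move=> U [n [cs [e [e0 chiC sub]]]].
have [m me] := nat_mul_gt1 e0.
have m_gt0 : (0 < m)%N by case: m me => //; rewrite mul0r ltr10.
pose code (g : B) : {ffun 'I_n -> 'I_m} := [ffun i => Ordinal (@cell_lt m (cs i g) m_gt0)].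
have [F codeF] := finite_transversal code.
have cover x : exists f u, [/\ f \in F, U u, x = mul f u & x = mul u f].
  have [f fF code_fx] := codeF x; exists f, (mul (inv f) x); split=> //.
  - apply: sub => i; have := congr1 (fun c : {ffun _ -> _} => val (c i)) code_fx; rewrite !ffunE /=.
    move=> /(cell_near me) near_fx; apply: near_int_eqmodZ (near_intN near_fx).
    have := eqmodZD (character_divl f x (chiC i)) (eqmodZN (character_one (chiC i))).
    by move/eqmodZ_sym; apply: eqmodZ_congr; ring.
  - by rewrite mulA mulrV mul1.
  - by rewrite Hab mulA mulrV mul1.
by exists F; split=> x; have [f [u [fF Uu e1 e2]]] := cover x; exists f, u.
Qed.

End BohrGroup.

Theorem proposition5 (G : topologicalType) (mul : G -> G -> G) (one : G) (inv : G -> G) :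
  paratopological_group mul one inv ->
  is_abelian mul ->
  lawson mul one ->
  bohr_separated mul.
Proof.
move=> Hpg Hab Hlaw; have [Hg _ _] := Hpg.
exists (bohr mul one), mul, one, inv, id; split=> //.
- split; last exact: bohr_inv_continuous Hpg.
  by split; [exact: Hg | exact: bohr_hausdorff Hpg Hab Hlaw | exact: bohr_mul_continuous].
- exact: bohr_totally_bounded Hpg Hab.
- exact: bohr_id_continuous Hpg.
- by exists id.
Qed.
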